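(* Let $G$ be a graph and $M$ a bipartizing matching of $G$. Then: (i) for every diamond subgraph $D$ of $G$, both vertices of degree $3$ in $D$ are covered by $M$; (ii) for every $v\in V(G)$, the graph $G[N_G(v)]$ does not contain two vertex-disjoint paths on $3$ vertices (as subgraphs); (iii) $G$ does not contain the wheel $W_k$ as a subgraph for any $k\ge 4$; (iv) $G$ does not contain an odd $k$-pool as a subgraph for any odd $k\ge 3$.
   Context: A matching $M\subseteq E(G)$ is a bipartizing matching of $G$ if $(V(G),E(G)\setminus M)$ is bipartite. A diamond is $K_4$ minus one edge. For $k\ge 3$, the wheel $W_k$ is the graph obtained from a cycle $C_k$ by adding a vertex adjacent to all cycle vertices. For $k\ge 3$, a $k$-pool is the graph with vertices $p_1,\dots,p_k,b_1,\dots,b_k$ whose edges are the cycle $p_1p_2\cdots p_kp_1$ and, for each $i$ (indices mod $k$), the edges $b_ip_i$ and $b_ip_{i+1}$; it is odd if $k$ is odd. *)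

From mathcomp Require Import all_boot.
Set Implicit Arguments. Unset Strict Implicit. Unset Printing Implicit Defensive.

Definition simple_graph (T : finType) (e : rel T) : Prop :=
  symmetric e /\ irreflexive e.

Definition contains (H : finType) (eH : rel H) (T : finType) (e : rel T) : Prop :=
  exists f : H -> T, injective f /\ forall x y, eH x y -> e (f x) (f y).

Definition matching (T : finType) (e M : rel T) : Prop :=
  [/\ forall x y, M x y -> e x y, symmetric M &
      forall x y z, M x y -> M x z -> y = z].

Definition bipartite_minus (T : finType) (e M : rel T) : Prop :=
  exists c : T -> bool, forall x y, e x y -> ~~ M x y -> c x != c y.

Definition bipartizing_matching (T : finType) (e M : rel T) : Prop :=
  matching e M /\ bipartite_minus e M.

Definition covered (T : finType) (M : rel T) (v : T) : Prop := exists u, M v u.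

(* Diamond on 'I_4: K4 minus the edge {0,3}; vertices 1 and 2 have degree 3. *)
Definition diamond_rel : rel 'I_4 :=
  fun i j => (i != j) && ~~ (((i : nat) == 0) && ((j : nat) == 3)
                          || ((i : nat) == 3) && ((j : nat) == 0)).
Definition d1 : 'I_4 := @Ordinal 4 1 isT.
Definition d2 : 'I_4 := @Ordinal 4 2 isT.

Definition cyc_rel (k : nat) : rel 'I_k :=
  fun i j => ((j : nat) == i.+1 %% k) || ((i : nat) == j.+1 %% k).

Definition wheel_rel (k : nat) : rel (option 'I_k) :=
  fun x y => match x, y with
             | Some i, Some j => cyc_rel i j
             | None, Some _ | Some _, None => true
             | None, None => false
             end.

(* k-pool: inl i = p_(i+1), inr i = b_(i+1); cycle on the p's and
   b_i adjacent to p_i and p_(i+1) (indices mod k). *)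
Definition pool_rel (k : nat) : rel ('I_k + 'I_k) :=
  fun x y => match x, y with
             | inl i, inl j => cyc_rel i j
             | inr i, inl j | inl j, inr i =>
                 ((j : nat) == i) || ((j : nat) == i.+1 %% k)
             | inr _, inr _ => false
             end.

Definition p3_rel : rel 'I_3 :=
  fun i j => ((j : nat) == i.+1) || ((i : nat) == j.+1).

Definition twoP3_rel : rel ('I_3 + 'I_3) :=
  fun x y => match x, y with
             | inl i, inl j => p3_rel i j
             | inr i, inr j => p3_rel i j
             | _, _ => false
             end.

Definition nbhd (T : finType) (e : rel T) (v : T) := {x : T | e v x}.
Definition nbhd_rel (T : finType) (e : rel T) (v : T) : rel (nbhd e v) :=
  fun x y => e (val x) (val y).

From mathcomp Require Import all_boot zify.

(* Since G - M is bipartite, every triangle of G contains an edge of M, and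
   edges of M are disjoint.  If a degree-3 vertex of a diamond were uncovered,
   its two triangles would match the other centre to both tips.  A vertex v
   must be matched into every P3 of G[N(v)], hence two disjoint ones give it
   two partners.  The hub of a wheel W_k is matched to at most one rim vertex,
   so with k >= 4 two consecutive rim edges away from its partner are both
   matched.  In an odd pool the odd cycle of the p_i is not 2-coloured by
   G - M, so one of its edges is matched, and the ear triangles then propagate
   a contradiction around the pool. *)

Set Implicit Arguments.
Unset Strict Implicit.
Unset Printing Implicit Defensive.

Section CyclicIndices.
Variable k : nat.

Lemma val_iter_ordS (i : 'I_k) n : val (iter n (@ordS k) i) = (i + n) %% k.
Proof.
elim: n => [|n IHn] /=; first by rewrite addn0 modn_small.
by rewrite IHn -addn1 modnDml addn1 addnS.
Qed.

Lemma iter_ordS_neq (i : 'I_k) n : 0 < n < k -> iter n (@ordS k) i != i.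
Proof.
move=> /andP[n_gt0 n_lt_k]; apply/negP => /eqP/(congr1 val).
rewrite val_iter_ordS => in_eq_i.
have : i + n == i + 0 %[mod k] by rewrite addn0 in_eq_i modn_small.
by rewrite eqn_modDl mod0n modn_small // eqn0Ngt n_gt0.
Qed.

Lemma iter_ordS_period (i : 'I_k) : iter k (@ordS k) i = i.
Proof. by apply: val_inj; rewrite val_iter_ordS modnDr modn_small. Qed.

Lemma cyc_rel_ordS (i : 'I_k) : cyc_rel i (ordS i).
Proof. by rewrite /cyc_rel /= eqxx. Qed.

End CyclicIndices.

Lemma alternating_cycle_even k (b : 'I_k -> bool) :
  (forall i, b (ordS i) = ~~ b i) -> ~~ odd k.
Proof.
case: k b => [//|k'] b b_alt.
have b_iter n : b (iter n (@ordS k'.+1) ord0) = b ord0 (+) odd n.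
  by elim: n => [|n IHn] /=; rewrite ?addbF // b_alt IHn addbN.
by move: (b_iter k'.+1); rewrite iter_ordS_period; case: (b ord0); case: odd.
Qed.


Section BipartizingMatching.
Variables (T : finType) (e M : rel T) (c : T -> bool).
Hypothesis e_sym : symmetric e.
Hypothesis M_sym : symmetric M.
Hypothesis M_partner_uniq : forall {x y z}, M x y -> M x z -> y = z.
Hypothesis c_proper : forall x y, e x y -> ~~ M x y -> c x != c y.

Lemma triangle_matched x y z :
  e x y -> e y z -> e x z -> ~~ M x y -> ~~ M x z -> M y z.
Proof.
move=> exy eyz exz nMxy nMxz; apply: contraT => nMyz.
move: (c_proper exy nMxy) (c_proper eyz nMyz) (c_proper exz nMxz).
by case: (c x); case: (c y); case: (c z).
Qed.

Lemma triangle_matched_opposite x y z u :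
  e x y -> e y z -> e x z -> M x u -> u != y -> u != z -> M y z.
Proof.
move=> exy eyz exz Mxu uy uz.
by apply: (triangle_matched exy) => //; apply/negP => Mxv;
  rewrite (M_partner_uniq Mxu Mxv) eqxx in uy uz.
Qed.

Lemma diamond_centre_covered x y u w :
  e x y -> e x u -> e x w -> e y u -> e y w -> u != w -> covered M x.
Proof.
move=> exy exu exw eyu eyw uw.
case: (pickP (M x)) => [z Mxz | x_unmatched]; first by exists z.
have Myu : M y u
  by rewrite M_sym (triangle_matched exu) // 1?e_sym // x_unmatched.
have Myw : M y w
  by rewrite M_sym (triangle_matched exw) // 1?e_sym // x_unmatched.
by rewrite (M_partner_uniq Myu Myw) eqxx in uw.
Qed.

Lemma neighbourhood_P3_matched v (g : 'I_3 -> T) :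
  injective g -> (forall i j, p3_rel i j -> e (g i) (g j)) ->
  (forall i, e v (g i)) -> exists i, M v (g i).
Proof.
move=> g_inj g_edge v_adj.
case: (pickP (fun i => M v (g i))) => [i Mvi | v_unmatched]; first by exists i.
pose o0 : 'I_3 := ord0; pose o1 : 'I_3 := Ordinal (isT : 1 < 3);
pose o2 : 'I_3 := Ordinal (isT : 2 < 3).
have M01 : M (g o1) (g o0).
  by rewrite M_sym (triangle_matched (v_adj o0)) ?v_unmatched //; apply: g_edge.
have M12 : M (g o1) (g o2).
  by rewrite (triangle_matched (v_adj o1)) ?v_unmatched //; apply: g_edge.
by have /g_inj := M_partner_uniq M01 M12.
Qed.

Lemma wheel_free k (f : option 'I_k -> T) :
  4 <= k -> injective f -> ~ (forall x y, wheel_rel x y -> e (f x) (f y)).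
Proof.
move=> k_ge4 f_inj f_edge.
pose hub := f None; pose rim i := f (Some i).
have rim_inj : injective rim by move=> i j /f_inj [].
have spoke_free_matched i :
  ~~ M hub (rim i) -> ~~ M hub (rim (ordS i)) -> M (rim i) (rim (ordS i)).
  by apply: triangle_matched; apply: f_edge => //; apply: cyc_rel_ordS.
pose succ n i := iter n (@ordS k) i.
have [j hub_free] :
    exists j : 'I_k, forall n, 0 < n < k -> ~~ M hub (rim (succ n j)).
  case: (pickP (fun i => M hub (rim i))) => [j Mhj | hub_unmatched].
    exists j => n n_range; apply/negP => /(M_partner_uniq Mhj)/rim_inj/eqP.
    by rewrite eq_sym (negPf (iter_ordS_neq j n_range)).
  by exists (Ordinal (ltnW (ltnW (ltnW k_ge4)))) => n _; rewrite hub_unmatched.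
have M12 : M (rim (succ 2 j)) (rim (succ 1 j)).
  by rewrite M_sym; apply: spoke_free_matched;
    [apply: (hub_free 1) | apply: (hub_free 2)]; lia.
have M23 : M (rim (succ 2 j)) (rim (succ 3 j)).
  by apply: spoke_free_matched;
    [apply: (hub_free 2) | apply: (hub_free 3)]; lia.
have /rim_inj/eqP := M_partner_uniq M12 M23.
by rewrite eq_sym (negPf (iter_ordS_neq (succ 1 j) (_ : 0 < 2 < k))) //; lia.
Qed.

(* A matched rim edge p_i p_(i+1) forces, ear after ear, the matched edges
   b_j p_(j+1) all around the pool, until b_i p_(i+1) clashes with it. *)
Lemma odd_pool_free k (f : 'I_k + 'I_k -> T) :
  3 <= k -> odd k -> injective f -> ~ (forall x y, pool_rel x y -> e (f x) (f y)).
Proof.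
move=> k_ge3 k_odd f_inj f_edge.
pose p i := f (inl i); pose b i := f (inr i).
have epp i : e (p i) (p (ordS i)) by apply: f_edge; apply: cyc_rel_ordS.
have epb i : e (p (ordS i)) (b (ordS i)).
  by rewrite e_sym; apply: f_edge; rewrite /= eqxx.
have ebp i : e (b i) (p (ordS i)) by apply: f_edge; rewrite /= eqxx orbT.
have p_neq_b i j : p i != b j by apply/eqP => /f_inj.
have p_inj : injective p by move=> i j /f_inj [].
have b_inj : injective b by move=> i j /f_inj [].
have [i Mi] : exists i, M (p i) (p (ordS i)).
  case: (pickP (fun i => M (p i) (p (ordS i)))) => [i Mi | cycle_unmatched].
    by exists i.
  suff : ~~ odd k by rewrite k_odd.
  apply: (@alternating_cycle_even k (fun i => c (p i))) => j.
  move: (c_proper (epp j)); rewrite cycle_unmatched => /(_ isT).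
  by case: (c (p j)); case: (c (p (ordS j))).
have propagate j u :
    M (p (ordS j)) u -> u != b (ordS j) -> u != p (ordS (ordS j)) ->
    M (b (ordS j)) (p (ordS (ordS j))).
  exact: triangle_matched_opposite (epb j) (ebp _) (epp _).
have two_steps_neq (j : 'I_k) : ordS (ordS j) != j.
  by apply: (iter_ordS_neq j (_ : 0 < 2 < k)); lia.
have one_step_neq (j : 'I_k) : ordS j != j.
  by apply: (iter_ordS_neq j (_ : 0 < 1 < k)); lia.
have ears_matched n :
    M (b (iter n.+1 (@ordS k) i)) (p (ordS (iter n.+1 (@ordS k) i))).
  elim: n => [|n IHn].
    apply: (propagate i (p i)); first by rewrite M_sym.
      exact: p_neq_b.
    by apply: contra_neq (two_steps_neq i) => /p_inj/esym.
  apply: (propagate _ (b (iter n.+1 (@ordS k) i))); first by rewrite M_sym.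
    by apply: contra_neq (one_step_neq (iter n.+1 (@ordS k) i)) => /b_inj/esym.
  by rewrite eq_sym p_neq_b.
have := ears_matched k.-1.
rewrite prednK ?(leq_trans _ k_ge3) // iter_ordS_period M_sym => Mbi.
rewrite M_sym in Mi.
by have /eqP := M_partner_uniq Mi Mbi; rewrite (negPf (p_neq_b _ _)).
Qed.

End BipartizingMatching.

Theorem lemma1 (T : finType) (e M : rel T) :
  simple_graph e -> bipartizing_matching e M ->
  [/\ (forall f : 'I_4 -> T, injective f ->
         (forall x y, diamond_rel x y -> e (f x) (f y)) ->
         covered M (f d1) /\ covered M (f d2)),
      (forall v : T, ~ contains twoP3_rel (@nbhd_rel T e v)),
      (forall k, 4 <= k -> ~ contains (@wheel_rel k) e) &
      (forall k, 3 <= k -> odd k -> ~ contains (@pool_rel k) e)].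
Proof.
move=> [e_sym _] [[_ M_sym M_uniq] [c c_proper]].
split=> [f f_inj f_edge | v [f [f_inj f_edge]] | k k_ge4 [f [f_inj f_edge]]
        | k k_ge3 k_odd [f [f_inj f_edge]]].
- pose d0 : 'I_4 := ord0; pose d3 : 'I_4 := Ordinal (isT : 3 < 4).
  have tips_neq : f d0 != f d3 by apply/eqP => /f_inj/(congr1 val).
  have centre_covered :=
    @diamond_centre_covered T e M c e_sym M_sym M_uniq c_proper.
  by split; [apply: (centre_covered _ (f d2) (f d0) (f d3))
            | apply: (centre_covered _ (f d1) (f d0) (f d3))]; try apply: f_edge.
- pose g (s : 'I_3 -> 'I_3 + 'I_3) (i : 'I_3) : T := val (f (s i)).
  have P3_matched s :
      injective s -> {homo s : i j / p3_rel i j >-> twoP3_rel i j} ->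
      exists i, M v (g s i).
    move=> s_inj s_edge; apply: (neighbourhood_P3_matched M_sym M_uniq c_proper).
    - by move=> i j /val_inj/f_inj/s_inj.
    - by move=> i j /s_edge/f_edge.
    - by move=> i; rewrite /g; case: (f (s i)).
  have [i Mi] := P3_matched inl inl_inj (fun _ _ => id).
  have [j Mj] := P3_matched inr inr_inj (fun _ _ => id).
  by have /val_inj/f_inj := M_uniq _ _ _ Mi Mj.
- exact: (wheel_free M_sym M_uniq c_proper k_ge4 f_inj).
- exact: (odd_pool_free e_sym M_sym M_uniq c_proper k_ge3 k_odd f_inj).
Qed.
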